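(* The homomorphism $\mu:\mathrm{PSL}(2,\mathbb{Z})\to\mathrm{PGL}(2,\mathbb{Z}[t,t^{-1},(1+t)^{-1}])$ is injective.
   Context: Matrices in square brackets denote their classes in projective linear groups (quotients of $\mathrm{GL}_2$ by unit scalars). $\mu$ is the group homomorphism determined by $\mu\left[\begin{smallmatrix}1&0\\1&1\end{smallmatrix}\right]=\left[\begin{smallmatrix}1&0\\0&-t\end{smallmatrix}\right]$ and $\mu\left[\begin{smallmatrix}1&-1\\0&1\end{smallmatrix}\right]=\left[\begin{smallmatrix}-\frac{t^2}{1+t}&\frac{t}{1+t}\\ \frac{1+t+t^2}{1+t}&\frac{1}{1+t}\end{smallmatrix}\right]$ (these images satisfy the defining relations $s_1s_2s_1=s_2s_1s_2$, $(s_1s_2s_1)^2=1$ of $\mathrm{PSL}(2,\mathbb{Z})$ with $s_1=\left[\begin{smallmatrix}1&-1\\0&1\end{smallmatrix}\right]$, $s_2=\left[\begin{smallmatrix}1&0\\1&1\end{smallmatrix}\right]$, so $\mu$ is well defined). *)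

From HB Require Import structures.
From mathcomp Require Import all_boot all_order all_algebra.
Set Implicit Arguments. Unset Strict Implicit. Unset Printing Implicit Defensive.
Import Order.TTheory GRing.Theory Num.Theory.
Local Open Scope ring_scope.

(* The ring Z[t, t^-1, (1+t)^-1] is viewed inside its fraction field
   Q(t) = {fraction {poly int}}. *)
Definition Ft := {fraction {poly int}}.
Definition tt_ : Ft := FracField.tofrac ('X : {poly int}).

(* Generators of PSL(2,Z) (representatives in SL(2,Z)). *)
Definition s1Z : 'M[int]_2 := \matrix_(i < 2, j < 2)
  (if i == 0 :> nat then (if j == 0 :> nat then 1 else -1)
   else (if j == 0 :> nat then 0 else 1)).
Definition s2Z : 'M[int]_2 := \matrix_(i < 2, j < 2)
  (if i == 0 :> nat then (if j == 0 :> nat then 1 else 0) else 1).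

(* Representatives in GL_2 of the images mu[s1], mu[s2]. *)
Definition mu_s2 : 'M[Ft]_2 := \matrix_(i < 2, j < 2)
  (if i == 0 :> nat then (if j == 0 :> nat then 1 else 0)
   else (if j == 0 :> nat then 0 else - tt_)).
Definition mu_s1 : 'M[Ft]_2 := \matrix_(i < 2, j < 2)
  (if i == 0 :> nat then
     (if j == 0 :> nat then - tt_ ^+ 2 / (1 + tt_) else tt_ / (1 + tt_))
   else
     (if j == 0 :> nat then (1 + tt_ + tt_ ^+ 2) / (1 + tt_) else 1 / (1 + tt_))).

(* Words in s1, s2 and their inverses: (true, _) is s1, (false, _) is s2;
   the second component says whether the letter is inverted. *)
Definition letterZ (l : bool * bool) : 'M[int]_2 :=
  let M := if l.1 then s1Z else s2Z in if l.2 then invmx M else M.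
Definition letterMu (l : bool * bool) : 'M[Ft]_2 :=
  let M := if l.1 then mu_s1 else mu_s2 in if l.2 then invmx M else M.

Definition wordZ (w : seq (bool * bool)) : 'M[int]_2 :=
  foldr (fun l M => letterZ l *m M) 1%:M w.
Definition wordMu (w : seq (bool * bool)) : 'M[Ft]_2 :=
  foldr (fun l M => letterMu l *m M) 1%:M w.

(* [wordZ w] is the identity of PSL(2,Z) iff wordZ w = +-1;
   mu [wordZ w] is the identity of PGL_2 iff wordMu w is a scalar matrix. *)
Definition trivial_in_PSL2Z (M : 'M[int]_2) : Prop := M = 1%:M \/ M = - 1%:M.
Definition trivial_in_PGL2 (M : 'M[Ft]_2) : Prop := exists c : Ft, M = c%:M.

From HB Require Import structures.
From mathcomp Require Import all_boot all_order all_algebra.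
From mathcomp Require Import ring lra zify.
Set Implicit Arguments. Unset Strict Implicit. Unset Printing Implicit Defensive.
Import Order.TTheory GRing.Theory Num.Theory.
Local Open Scope ring_scope.

(* PSL(2,Z) is the free product <a | a^2> * <b | b^3> with
   a = s1 s2 s1 and b = s1 s2, so a word in s1^{+-1}, s2^{+-1} is +-1 in
   SL(2,Z) iff its reduced alternating word in a, b, b^2 is empty. Up to
   nonzero scalars the images under mu are matrices over Z[t]; if mu(w) is
   scalar, so is its specialisation at t = -2. There the images of a and b
   play ping-pong on the quadratic form Q(x, y) = y (3x + 2y): a exchanges
   the cones Q > 0 and Q < 0 and multiplies |Q| by its determinant, while b
   and b^2 map Q > 0 into Q < 0 and multiply |Q| by strictly more than their
   determinant. Hence no nonempty alternating word acts as a scalar. *)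

Section MatrixWords.
Variables (R : comNzRingType) (n : nat).
Implicit Types T S : Type.

Definition mxword T (X : T -> 'M[R]_n) (w : seq T) : 'M[R]_n :=
  foldr (fun l M => X l *m M) 1%:M w.

Lemma eq_mxword T (X Y : T -> 'M[R]_n) : X =1 Y -> mxword X =1 mxword Y.
Proof. by move=> eXY; elim=> [|l w IH] //=; rewrite eXY IH. Qed.

Lemma mxword_cat T (X : T -> 'M[R]_n) u v :
  mxword X (u ++ v) = mxword X u *m mxword X v.
Proof. by elim: u => [|l u IH] /=; rewrite ?mul1mx // IH mulmxA. Qed.

Lemma mxword_flatten T S (X : T -> 'M[R]_n) (g : S -> seq T) w :
  mxword X (flatten (map g w)) = mxword (fun l => mxword X (g l)) w.
Proof. by elim: w => [|l w IH] //=; rewrite mxword_cat IH. Qed.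

Lemma mxword_scale T (c : T -> R) (X : T -> 'M[R]_n) w :
  mxword (fun l => c l *: X l) w = (\prod_(l <- w) c l) *: mxword X w.
Proof.
elim: w => [|l w IH]; first by rewrite big_nil scale1r.
by rewrite /= IH big_cons -scalemxAr -scalemxAl scalerA mulrC.
Qed.

End MatrixWords.

Lemma map_mxword (R S : comNzRingType) n T (f : {rmorphism R -> S})
    (X : T -> 'M[R]_n) w :
  map_mx f (mxword X w) = mxword (fun l => map_mx f (X l)) w.
Proof. by elim: w => [|l w IH] /=; rewrite ?map_mx1 // map_mxM IH. Qed.

Lemma mulmx1_invmx (R : comUnitRingType) n (A B : 'M[R]_n) :
  A *m B = 1%:M -> invmx A = B.
Proof.
move=> AB1; have [uA _] := mulmx1_unit AB1.
by rewrite -[invmx A]mulmx1 -AB1 mulmxA mulVmx ?mul1mx.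
Qed.

Lemma scalemx_is_scalar (R : idomainType) n (a : R) (A : 'M[R]_n) :
  a != 0 -> is_scalar_mx (a *: A) = is_scalar_mx A.
Proof.
move=> nz_a; rewrite /is_scalar_mx; case: insub => // i.
by rewrite mxE -scale_scalar_mx (inj_eq (scalemx_inj nz_a)).
Qed.

Lemma map_mx_is_scalar_inj (R S : nzRingType) (f : {rmorphism R -> S}) n
    (A : 'M[R]_n) :
  injective f -> is_scalar_mx (map_mx f A) = is_scalar_mx A.
Proof.
move=> f_inj; have map_inj : injective (map_mx f : 'M_n -> 'M_n).
  move=> B C /matrixP eqBC; apply/matrixP=> i j; apply: f_inj.
  by have := eqBC i j; rewrite !mxE.
rewrite /is_scalar_mx; case: insub => // i.
by rewrite mxE -map_scalar_mx (inj_eq map_inj).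
Qed.

Lemma is_scalar_map_mx (R S : nzRingType) (f : {rmorphism R -> S}) n
    (A : 'M[R]_n) :
  is_scalar_mx A -> is_scalar_mx (map_mx f A).
Proof. by move=> /is_scalar_mxP[a ->]; rewrite map_scalar_mx scalar_mx_is_scalar. Qed.

Section Mx2.
Variable R : comNzRingType.

Definition mx2 (a b c d : R) : 'M[R]_2 := \matrix_(i < 2, j < 2)
  (if i == 0 :> nat then (if j == 0 :> nat then a else b)
   else (if j == 0 :> nat then c else d)).

Lemma mulmx2E (M N : 'M[R]_2) i j :
  (M *m N) i j = M i 0 * N 0 j + M i 1 * N 1 j.
Proof.
rewrite mxE !big_ord_recl big_ord0 addr0 (_ : lift ord0 ord0 = 1) //.
exact: val_inj.
Qed.

Lemma mx2_mul a b c d a' b' c' d' : mx2 a b c d *m mx2 a' b' c' d' =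
  mx2 (a * a' + b * c') (a * b' + b * d') (c * a' + d * c') (c * b' + d * d').
Proof. by apply/matrixP=> -[[|[|//]] ?] -[[|[|//]] ?]; rewrite mulmx2E !mxE. Qed.

Lemma mx2_scalar c : c%:M = mx2 c 0 0 c.
Proof. by apply/matrixP=> -[[|[|//]] ?] -[[|[|//]] ?]; rewrite !mxE. Qed.

Lemma mx2_scale k a b c d : k *: mx2 a b c d = mx2 (k * a) (k * b) (k * c) (k * d).
Proof. by apply/matrixP=> -[[|[|//]] ?] -[[|[|//]] ?]; rewrite !mxE. Qed.

Definition act2 (M : 'M[R]_2) (v : R * R) :=
  (M 0 0 * v.1 + M 0 1 * v.2, M 1 0 * v.1 + M 1 1 * v.2).

Lemma act2M M N v : act2 (M *m N) v = act2 M (act2 N v).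
Proof. by rewrite /act2 !mulmx2E /=; congr pair; ring. Qed.

Definition det2 (M : 'M[R]_2) := M 0 0 * M 1 1 - M 0 1 * M 1 0.

Lemma det2M M N : det2 (M *m N) = det2 M * det2 N.
Proof. by rewrite /det2 !mulmx2E; ring. Qed.

End Mx2.

Lemma map_mx2 (R S : comNzRingType) (f : R -> S) a b c d :
  map_mx f (mx2 a b c d) = mx2 (f a) (f b) (f c) (f d).
Proof. by apply/matrixP=> -[[|[|//]] ?] -[[|[|//]] ?]; rewrite !mxE. Qed.

(* Reduced words of <a | a^2> * <b | b^3> are the alternating words in a, b
   and b^2 (= Lbb). *)
Inductive ab_letter := La | Lb | Lbb.

Definition is_b (x : ab_letter) := if x is La then false else true.

Definition alternating := sorted (fun x y => is_b x != is_b y).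

Definition mul_a (r : seq ab_letter) := if r is La :: r' then r' else La :: r.

Definition mul_b (r : seq ab_letter) :=
  match r with Lb :: r' => Lbb :: r' | Lbb :: r' => r' | _ => Lb :: r end.

Definition mul_letter x r :=
  match x with La => mul_a r | Lb => mul_b r | Lbb => mul_b (mul_b r) end.

Definition reduce (u : seq ab_letter) := foldr mul_letter [::] u.

Lemma alternating_mul_letter x r : alternating r -> alternating (mul_letter x r).
Proof. by case: x; case: r => [|[] [|[] r]]. Qed.

Lemma alternating_reduce u : alternating (reduce u).
Proof. by elim: u => [|x u IH] //; apply: alternating_mul_letter. Qed.

(* s1 = b^2 a, s2 = a b^2, s1^-1 = a b and s2^-1 = b a in PSL(2,Z). *)
Definition gen_ab (l : bool * bool) : seq ab_letter :=
  match l with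
  | (true, false) => [:: Lbb; La]
  | (false, false) => [:: La; Lbb]
  | (true, true) => [:: La; Lb]
  | (false, true) => [:: Lb; La]
  end.

Definition nf (w : seq (bool * bool)) := reduce (flatten (map gen_ab w)).

Section FreeProductRep.
Variables (R : comNzRingType) (n : nat) (a b : 'M[R]_n).

Definition abmx x := match x with La => a | Lb => b | Lbb => b *m b end.

Variables (P : pred R) (ka kb : R).
Hypotheses (P1 : P 1) (PM : forall x y, P x -> P y -> P (x * y)).
Hypotheses (Pka : P ka) (Pkb : P kb).
Hypotheses (a2 : a *m a = ka%:M) (b3 : b *m (b *m b) = kb%:M).

Lemma abmx_mul_letter x r :
  exists2 k, P k & abmx x *m mxword abmx r = k *: mxword abmx (mul_letter x r).
Proof.
have step_a r' : exists2 k, P k & a *m mxword abmx r' = k *: mxword abmx (mul_a r').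
  case: r' => [|[] r'] /=; try by exists 1; rewrite ?scale1r.
  by exists ka; rewrite // mulmxA a2 mul_scalar_mx.
have step_b r' : exists2 k, P k & b *m mxword abmx r' = k *: mxword abmx (mul_b r').
  case: r' => [|[] r'] /=; try by exists 1; rewrite ?scale1r.
  - by exists 1; rewrite // scale1r mulmxA.
  - by exists kb; rewrite // mulmxA b3 mul_scalar_mx.
case: x => /=; [exact: step_a | exact: step_b |].
rewrite -mulmxA; have [k1 Pk1 ->] := step_b r; rewrite -scalemxAr.
have [k2 Pk2 ->] := step_b (mul_b r).
by exists (k1 * k2); [exact: PM | rewrite scalerA].
Qed.

Lemma mxword_reduce u : exists2 k, P k & mxword abmx u = k *: mxword abmx (reduce u).
Proof.
elim: u => [|x u [k1 Pk1 IH]]; first by exists 1; rewrite ?scale1r.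
have [k2 Pk2 e] := abmx_mul_letter x (reduce u).
by exists (k1 * k2); [exact: PM | rewrite /= IH -scalemxAr e scalerA].
Qed.

Lemma mxword_nf w : exists2 k, P k &
  mxword (fun l => mxword abmx (gen_ab l)) w = k *: mxword abmx (nf w).
Proof. by rewrite -mxword_flatten; apply: mxword_reduce. Qed.

End FreeProductRep.

Definition aZ := s1Z *m s2Z *m s1Z.
Definition bZ := s1Z *m s2Z.

Lemma s2Z_mx2 : s2Z = mx2 1 0 1 1.
Proof. by apply/matrixP=> -[[|[|//]] ?] -[[|[|//]] ?]; rewrite !mxE. Qed.

Lemma letterZ_gen_ab l : letterZ l = -1 *: mxword (abmx aZ bZ) (gen_ab l).
Proof.
have s1E : s1Z = mx2 1 (-1) 0 1 by [].
case: l => [[] []];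
  rewrite /letterZ /aZ /bZ /= s1E s2Z_mx2 mulmx1 !mx2_mul mx2_scale //.
all: by apply: mulmx1_invmx; rewrite mx2_mul mx2_scalar.
Qed.

Lemma wordZ_nf w :
  exists2 k : int, k \is a GRing.unit & wordZ w = k *: mxword (abmx aZ bZ) (nf w).
Proof.
have unitM (x y : int) :
    x \is a GRing.unit -> y \is a GRing.unit -> x * y \is a GRing.unit.
  by move=> ux uy; rewrite unitrM ux uy.
have aZ2 : aZ *m aZ = (-1)%:M by rewrite /aZ s2Z_mx2 !mx2_mul mx2_scalar.
have bZ3 : bZ *m (bZ *m bZ) = (-1)%:M by rewrite /bZ s2Z_mx2 !mx2_mul mx2_scalar.
have -> : wordZ w = mxword (fun l => -1 *: mxword (abmx aZ bZ) (gen_ab l)) w.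
  exact: (eq_mxword letterZ_gen_ab w).
rewrite (mxword_scale (fun=> -1)).
have [k uk ->] := mxword_nf (P := [pred k : int | k \is a GRing.unit])
  (unitr1 _) unitM (unitrN1 _) (unitrN1 _) aZ2 bZ3 w.
exists ((\prod_(l <- w) -1) * k); last by rewrite scalerA.
by apply: unitM uk; apply: unitr_prod => _ _; exact: unitrN1.
Qed.

Definition muP (R : comNzRingType) (t : R) (l : bool * bool) : 'M[R]_2 :=
  match l with
  | (true, false) => mx2 (- t ^+ 2) t (1 + t + t ^+ 2) 1
  | (false, false) => mx2 1 0 0 (- t)
  | (true, true) => mx2 1 (- t) (- (1 + t + t ^+ 2)) (- t ^+ 2)
  | (false, true) => mx2 (- t) 0 0 1
  end.

Definition mu_scale (F : fieldType) (t : F) (l : bool * bool) : F :=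
  match l with
  | (true, false) => (1 + t)^-1
  | (false, false) => 1
  | (true, true) => - (t * (1 + t))^-1
  | (false, true) => - t^-1
  end.

Lemma map_muP (R S : comNzRingType) (f : {rmorphism R -> S}) t l :
  map_mx f (muP t l) = muP (f t) l.
Proof.
by case: l => [[] []]; rewrite map_mx2 ?rmorphN ?rmorphD ?rmorphXn ?rmorph1 ?rmorph0.
Qed.

Lemma map_mxword_muP (R S : comNzRingType) (f : {rmorphism R -> S}) t t' w :
  f t = t' -> map_mx f (mxword (muP t) w) = mxword (muP t') w.
Proof. by move=> ft; rewrite map_mxword; apply: eq_mxword => l; rewrite map_muP ft. Qed.

Lemma tofrac_inj (R : idomainType) : injective (@FracField.tofrac R).
Proof. by move=> p q /eqP; rewrite tofrac_eq => /eqP. Qed.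

Lemma tt_neq0 : tt_ != 0.
Proof. by rewrite tofrac_eq0 polyX_eq0. Qed.

Lemma tt_add1_neq0 : 1 + tt_ != 0.
Proof.
have -> : 1 + tt_ = FracField.tofrac (1 + 'X) by rewrite rmorphD rmorph1.
rewrite tofrac_eq0; apply/eqP => /(congr1 (coefp 1)) /=.
by rewrite coefD coef1 coefX coef0.
Qed.

Section MuAtUnit.
Variables (F : fieldType) (t : F).
Hypotheses (t_neq0 : t != 0) (t_add1_neq0 : 1 + t != 0).

Lemma mu_scale_neq0 l : mu_scale t l != 0.
Proof.
by case: l => [[] []]; rewrite /mu_scale ?oppr_eq0 ?invr_eq0 ?mulf_neq0 ?oner_neq0.
Qed.

Let mu1 :=
  mx2 (- t ^+ 2 / (1 + t)) (t / (1 + t)) ((1 + t + t ^+ 2) / (1 + t)) (1 / (1 + t)).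
Let mu2 := mx2 1 0 0 (- t).

Lemma mu1_muP : mu1 = mu_scale t (true, false) *: muP t (true, false).
Proof. by rewrite /= mx2_scale; congr mx2; field. Qed.

Lemma mu1_invmx : invmx mu1 = mu_scale t (true, true) *: muP t (true, true).
Proof.
apply: mulmx1_invmx; rewrite /= mx2_scale mx2_mul mx2_scalar.
by congr mx2; field; rewrite t_add1_neq0 t_neq0.
Qed.

Lemma mu2_muP : mu2 = mu_scale t (false, false) *: muP t (false, false).
Proof. by rewrite scale1r. Qed.

Lemma mu2_invmx : invmx mu2 = mu_scale t (false, true) *: muP t (false, true).
Proof.
apply: mulmx1_invmx; rewrite /= mx2_scale mx2_mul mx2_scalar.
by congr mx2; field.
Qed.

End MuAtUnit.

Lemma letterMu_muP l : letterMu l = mu_scale tt_ l *: muP tt_ l.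
Proof.
have [t0 t1] := (tt_neq0, tt_add1_neq0).
have s1E : mu_s1 = mx2 (- tt_ ^+ 2 / (1 + tt_)) (tt_ / (1 + tt_))
  ((1 + tt_ + tt_ ^+ 2) / (1 + tt_)) (1 / (1 + tt_)) by [].
have s2E : mu_s2 = mx2 1 0 0 (- tt_) by [].
case: l => [[] []]; rewrite /letterMu [LHS]/= ?s1E ?s2E.
- exact: (@mu1_invmx _ tt_ t0 t1).
- exact: (@mu1_muP _ tt_ t1).
- exact: (@mu2_invmx _ tt_ t0).
- exact: (@mu2_muP _ tt_).
Qed.

Lemma wordMu_muP w : exists2 c, c != 0 & wordMu w = c *: mxword (muP tt_) w.
Proof.
exists (\prod_(l <- w) mu_scale tt_ l).
  rewrite prodf_seq_neq0; apply/allP => l _.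
  exact: mu_scale_neq0 tt_neq0 tt_add1_neq0 l.
by rewrite -mxword_scale; exact: (eq_mxword letterMu_muP w).
Qed.

Definition aM : 'M[int]_2 :=
  muP (-2) (true, false) *m muP (-2) (false, false) *m muP (-2) (true, false).
Definition bM : 'M[int]_2 := muP (-2) (true, false) *m muP (-2) (false, false).

Lemma aM_mx2 : aM = mx2 4 4 (-6) (-4).
Proof. by rewrite /aM /= !mx2_mul. Qed.

Lemma bM_mx2 : bM = mx2 (-4) (-4) 3 2.
Proof. by rewrite /bM /= !mx2_mul. Qed.

Definition scale_m2 (l : bool * bool) : int :=
  match l with
  | (true, false) => 8
  | (false, false) => -8
  | (true, true) => -4
  | (false, true) => 4
  end.

Lemma gen_ab_m2 l : mxword (abmx aM bM) (gen_ab l) = scale_m2 l *: muP (-2) l.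
Proof.
by case: l => [[] []]; rewrite /= aM_mx2 bM_mx2 mulmx1 !mx2_mul mx2_scale.
Qed.

Lemma nf_m2_is_scalar w : is_scalar_mx (mxword (muP (-2 : int)) w) ->
  is_scalar_mx (mxword (abmx aM bM) (nf w)).
Proof.
have PM (x y : int) : x != 0 -> y != 0 -> x * y != 0 by exact: mulf_neq0.
have aM2 : aM *m aM = (-8)%:M by rewrite aM_mx2 mx2_mul mx2_scalar.
have bM3 : bM *m (bM *m bM) = 8%:M by rewrite bM_mx2 !mx2_mul mx2_scalar.
have [k nz_k e] := mxword_nf (P := [pred k : int | k != 0]) (ka := -8) (kb := 8)
  isT PM isT isT aM2 bM3 w.
rewrite (eq_mxword gen_ab_m2) mxword_scale in e.
have nz_prod : \prod_(l <- w) scale_m2 l != 0.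
  by rewrite prodf_seq_neq0; apply/allP => -[[] []].
by rewrite -(scalemx_is_scalar _ nz_prod) e scalemx_is_scalar.
Qed.

Definition Q (v : int * int) := v.2 * (3 * v.1 + 2 * v.2).

Definition Qs (s : bool) v := if s then Q v else - Q v.

Lemma Q_aM v : Q (act2 aM v) = - det2 aM * Q v.
Proof. by rewrite aM_mx2 /Q /act2 /det2 !mxE /=; ring. Qed.

Lemma Q_bM v : - Q (act2 bM v) = det2 bM * Q v + 2 * (3 * v.1 + 2 * v.2) ^+ 2.
Proof. by rewrite bM_mx2 /Q /act2 /det2 !mxE /=; ring. Qed.

Lemma Q_bM2 v : - Q (act2 (bM *m bM) v) = det2 (bM *m bM) * Q v + 32 * v.2 ^+ 2.
Proof. by rewrite bM_mx2 mx2_mul /Q /act2 /det2 !mxE /=; ring. Qed.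

Local Notation Mx := (abmx aM bM).

Lemma letter_pingpong x v : 0 < Qs (is_b x) v ->
  let M := Mx x in
  [/\ 0 < det2 M, det2 M * Qs (is_b x) v <= Qs (~~ is_b x) (act2 M v)
    & is_b x -> det2 M * Qs (is_b x) v < Qs (~~ is_b x) (act2 M v)].
Proof.
have sqr_pos (y z : int) : 0 < y * z -> 0 < y ^+ 2 /\ 0 < z ^+ 2.
  move=> /lt0r_neq0; rewrite mulf_eq0 negb_or => /andP[y0 z0].
  by rewrite !exprn_even_gt0 //= y0 z0.
case: x => /= Qv.
- by rewrite Q_aM /det2 aM_mx2 !mxE /= -mulNr; split=> //; lra.
- have [_ pos] := sqr_pos _ _ Qv.
  by rewrite Q_bM /det2 bM_mx2 !mxE /=; split=> //; lra.
- have [pos _] := sqr_pos _ _ Qv.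
  by rewrite Q_bM2 /det2 bM_mx2 mx2_mul !mxE /=; split=> //; lra.
Qed.

Local Notation Mw := (mxword Mx).

(* The last letter of a word acts first. *)
Lemma pingpong_bound x r v : alternating (x :: r) -> 0 < Qs (is_b (last x r)) v ->
  let M := Mw (x :: r) in
  [/\ 0 < det2 M,
      det2 M * Qs (is_b (last x r)) v <= Qs (~~ is_b x) (act2 M v)
    & has is_b (x :: r) ->
      det2 M * Qs (is_b (last x r)) v < Qs (~~ is_b x) (act2 M v)].
Proof.
elim: r x => [|y r IH] x alt pos.
  by rewrite /= mulmx1 orbF; exact: letter_pingpong.
move: alt => /= /andP[xy alt]; have [d0 le lt] := IH y alt pos.
rewrite (_ : ~~ is_b y = is_b x) in le lt; last by case: (is_b x) (is_b y) xy => [] [].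
have [dx lex ltx] := letter_pingpong (lt_le_trans (mulr_gt0 d0 pos) le).
rewrite act2M det2M -mulrA; split; first exact: mulr_gt0.
  by apply: le_trans lex; rewrite ler_pM2l.
case/orP=> [/ltx | /lt] lt_x; first by apply: le_lt_trans lt_x; rewrite ler_pM2l.
by apply: lt_le_trans lex; rewrite ltr_pM2l.
Qed.

Lemma pingpong r : alternating r -> is_scalar_mx (Mw r) -> r = [::].
Proof.
case: r => [//|x r] alt /is_scalar_mxP[c Mc].
have [hb | no_b] := boolP (has is_b (x :: r)); last first.
  move: no_b alt Mc; case: x => //; case: r => [|[] r] //= _ _.
  by rewrite mulmx1 aM_mx2 => /matrixP/(_ 0 1); rewrite !mxE.
pose v : int * int := if is_b (last x r) then (1, 1) else (1, -1).
have pos : 0 < Qs (is_b (last x r)) v by rewrite /v; case: (is_b _).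
have [d0 _ /(_ hb)] := pingpong_bound alt pos.
rewrite Mc /det2 /act2 /v !mxE /= in d0 *.
by case: (is_b _); case: (is_b _); rewrite /Qs /Q /=; nia.
Qed.

Theorem lemma3p14 (w : seq (bool * bool)) :
  trivial_in_PGL2 (wordMu w) -> trivial_in_PSL2Z (wordZ w).
Proof.
have [c nz_c ->] := wordMu_muP w.
move=> /is_scalar_mxP; rewrite scalemx_is_scalar //.
rewrite -(map_mxword_muP (f := @FracField.tofrac _) (t := 'X) (t' := tt_)) //.
rewrite map_mx_is_scalar_inj; last exact: tofrac_inj.
move=> /(is_scalar_map_mx (horner_eval (-2))).
rewrite (map_mxword_muP (t' := -2)); last exact: hornerX.
move=> /nf_m2_is_scalar /(pingpong (r := nf w) (alternating_reduce _)) nf_nil.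
have [k /orP[] /eqP -> ->] := wordZ_nf w; rewrite nf_nil /=.
- by left; rewrite scale1r.
- by right; rewrite scaleN1r.
Qed.
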